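(* Let $\mathbf{F}$ be a regular $1$-independent normed space of functions over a set $X$, let $\omega_1,\dots,\omega_n\in Mult(\mathbf{F})$ and $\vec\omega=(\omega_1,\dots,\omega_n):X\to\mathbb{C}^n$. Let $Y\subset\mathbb{C}^n$ be a bounded domain such that the polynomials are dense in $A(Y)$ with respect to $\sup_{\overline Y}|\cdot|$, and the closure of the open unit ball of the polynomials (sup norm on $Y$) in the topology of pointwise convergence on $Y$ equals the closed unit ball of $H_\infty(Y)$. Assume $\vec\omega(X)\subset\overline{Y}$, and that $C_{\vec\omega}:p\mapsto p\circ\vec\omega$ maps the polynomials into $Mult(\mathbf{F})$ and is bounded with respect to the norm $\sup_{\overline{Y}}|p|$. Then: (i) $C_{\vec\omega}$ maps $A(Y)$ (its elements viewed as continuous functions on $\overline Y$) boundedly into $Mult(\mathbf{F})$; (ii) if additionally $\vec\omega(X)\subset Y$, then $C_{\vec\omega}$ maps $H_\infty(Y)$ boundedly into $Mult(\mathbf{F})$.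
   Context: A normed space of functions over a set $X$ is a linear subspace of the space of all functions $X\to\mathbb{C}$ with a norm for which point evaluations are bounded; it is $1$-independent if for each $x$ some $f\in\mathbf{F}$ has $f(x)\ne0$, and regular if its closed unit ball is closed in the topology of pointwise convergence on $X$. $Mult(\mathbf{F})$ is the set of $\omega:X\to\mathbb{C}$ with $\omega f\in\mathbf{F}$ for all $f\in\mathbf{F}$ and $f\mapsto\omega f$ bounded, normed by the operator norm. $H_\infty(Y)$ is the space of bounded holomorphic functions on $Y$ with the sup norm; $A(Y)$ is its closed subspace of functions extending continuously to $\overline Y$. *)

(* Complex numbers are R[i] (real_closed's
   complex) for an arbitrary R : realType; we use the copy (R[i])^o which carries
   MathComp-Analysis' normed/topological structure of a numFieldType over itself. *)
From HB Require Import structures.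
From mathcomp Require Import all_boot all_order all_algebra.
From mathcomp Require Import all_classical all_reals all_analysis.
From mathcomp Require Import complex.
From mathcomp Require mpoly.
Import Order.TTheory GRing.Theory Num.Theory.
Import numFieldNormedType.Exports.

Set Implicit Arguments.
Unset Strict Implicit.
Unset Printing Implicit Defensive.

Local Open Scope classical_set_scope.
Local Open Scope ring_scope.

Notation CC R := ((R[i])^o).
Notation CCn R n := ('rV[(R[i])^o]_n).

Section Defs.
Context {R : realType}.
Local Notation C := (CC R).
Local Notation Cn n := (CCn R n).

Definition cmod (z : C) : R := ComplexField.Normc.normc (z : R[i]).

Definition supnorm {T : Type} (S : set T) (g : T -> C) : R :=
  sup [set cmod (g z) | z in S].

Definition normed_function_space {X : Type} (F : set (X -> C)) (N : (X -> C) -> R)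
  : Prop :=
  [/\ F (fun _ => 0),
      (forall f g, F f -> F g -> F (fun x => f x + g x)) &
      (forall (a : C) f, F f -> F (fun x => a * f x))] /\
  [/\ (forall f, F f -> 0 <= N f),
      (forall f, F f -> N f = 0 -> f = (fun _ => 0)),
      (forall (a : C) f, F f -> N (fun x => a * f x) = cmod a * N f),
      (forall f g, F f -> F g -> N (fun x => f x + g x) <= N f + N g) &
      (forall x : X, exists c : R, forall f, F f -> cmod (f x) <= c * N f)].

Definition one_independent {X : Type} (F : set (X -> C)) : Prop :=
  forall x : X, exists f, F f /\ f x != 0.

Definition regular_fs {X : Type} (F : set (X -> C)) (N : (X -> C) -> R) : Prop :=
  closed ([set f | F f /\ N f <= 1] : set {ptws X -> C}).

Definition is_mult {X : Type} (F : set (X -> C)) (N : (X -> C) -> R) (om : X -> C)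
  : Prop :=
  (forall f, F f -> F (fun x => om x * f x)) /\
  (exists c : R, forall f, F f -> N (fun x => om x * f x) <= c * N f).

Definition mult_norm {X : Type} (F : set (X -> C)) (N : (X -> C) -> R) (om : X -> C)
  : R := sup [set N (fun x => om x * f x) | f in [set f | F f /\ N f <= 1]].

Definition bounded_into_Mult {X A : Type} (F : set (X -> C)) (N : (X -> C) -> R)
  (D : set A) (nrm : A -> R) (T : A -> (X -> C)) : Prop :=
  (forall g, D g -> is_mult F N (T g)) /\
  (exists K : R, forall g, D g -> mult_norm F N (T g) <= K * nrm g).

Definition bounded_domain {n : nat} (Y : set (Cn n)) : Prop :=
  [/\ Y !=set0, open Y, connected Y & bounded_set Y].

(* holomorphic = complex (Frechet) differentiable at each point of Y *)
Definition holo_on {n : nat} (Y : set (Cn n)) (g : Cn n -> C) : Prop :=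
  forall z, Y z -> differentiable g z.

Definition Hinf {n : nat} (Y : set (Cn n)) (g : Cn n -> C) : Prop :=
  holo_on Y g /\ exists M : R, forall z, Y z -> cmod (g z) <= M.

Definition Aalg {n : nat} (Y : set (Cn n)) (g : Cn n -> C) : Prop :=
  Hinf Y g /\ {within closure Y, continuous g}.

Definition polyfun {n : nat} (p : mpoly.mpoly n C) (z : Cn n) : C :=
  mpoly.meval (fun i => z ord0 i) p.

Definition restr {n : nat} (Y : set (Cn n)) (g : Cn n -> C) : {ptws Y -> C} :=
  fun y => g (val y).

Definition vecfun {X : Type} {n : nat} (w : 'I_n -> X -> C) (x : X) : Cn n :=
  \row_i w i x.

End Defs.
Arguments restr {R n} Y g _.

From HB Require Import structures.
From mathcomp Require Import all_boot all_order all_algebra.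
From mathcomp Require Import all_classical all_reals all_analysis.
From mathcomp Require Import complex.
From mathcomp Require mpoly.
From mathcomp Require Import lra.
Import Order.TTheory GRing.Theory Num.Theory.
Import numFieldNormedType.Exports.
Local Open Scope classical_set_scope.
Local Open Scope ring_scope.

(* Let K bound C_w on polynomials and let f be in F.  For g in A(Y), pick polynomials p_k
   with sup_{closure Y} |g - p_k| <= 1/(k+1).  The multipliers p_k o w have norm at most
   K (sup |g| + 1/(k+1)), and since w(X) lies in the closure of Y, (p_k o w) f converges
   pointwise to (g o w) f.  Regularity of F says that norm balls of F are closed for
   pointwise convergence, so (g o w) f stays in the ball of radius K (sup |g| + eps) N(f).
   For g in the unit ball of H_infty(Y), g is a pointwise limit on Y of polynomials of sup
   norm < 1; as w(X) lies in Y, u |-> (u o w) f is continuous for the pointwise topologies,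
   and the same closed-ball argument applies. *)

Section Modulus.
Context {R : realType}.
Local Notation C := (CC R).
Implicit Types (z u : C) (r : R).

Lemma cmodE z : (cmod z)%:C%C = `|z|.
Proof. by case: z. Qed.

Lemma cmod_lt z r : (cmod z < r) = (`|z| < r%:C%C).
Proof. by rewrite -cmodE ltcR. Qed.

Lemma cmod_ge0 z : 0 <= cmod z.
Proof. by rewrite -(@lecR R) cmodE normr_ge0. Qed.

Lemma cmodM z u : cmod (z * u) = cmod z * cmod u.
Proof. exact: ComplexField.Normc.normcM. Qed.

Lemma cmodD z u : cmod (z + u) <= cmod z + cmod u.
Proof. exact: le_normcD. Qed.

Lemma cmodN z : cmod (- z) = cmod z.
Proof. exact: normcN. Qed.

Lemma cmodB z u : cmod (z - u) = cmod (u - z).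
Proof. by rewrite /cmod -normcN opprB. Qed.

Lemma cmodR r : 0 <= r -> cmod r%:C%C = r.
Proof. by move=> r0; apply: (@complexI R); rewrite cmodE ger0_norm // ler0c. Qed.

Lemma gt0_complexE (e : C) : 0 < e -> exists2 r, 0 < r & e = r%:C%C.
Proof.
move=> e0; have /complex_realP[r er] := gtr0_real e0.
by move: e0; rewrite er ltcR => r0; exists r.
Qed.

Lemma cvg_cmod_natSinv (u : nat -> C) (a : C) :
  (forall k, cmod (a - u k) <= k.+1%:R^-1) -> u @ \oo --> a.
Proof.
move=> hu; apply/cvgrPdist_lt => _ /gt0_complexE[r r0 ->].
near=> k; rewrite -cmod_lt; apply: le_lt_trans (hu k) _.
by near: k; exact: near_infty_natSinv_lt (PosNum r0).
Unshelve. all: by end_near.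
Qed.

End Modulus.

Section SupNorm.
Context {R : realType} {T : Type} {D : set T} {h : T -> CC R} {b : R}.

Lemma supnorm_le : D !=set0 -> (forall z, D z -> cmod (h z) <= b) -> supnorm D h <= b.
Proof.
move=> [z0 Dz0] hb; apply: ge_sup; first by exists (cmod (h z0)), z0.
by move=> _ [z Dz <-]; exact: hb.
Qed.

Lemma cmod_le_supnorm :
  (forall z, D z -> cmod (h z) <= b) -> forall z, D z -> cmod (h z) <= supnorm D h.
Proof.
move=> hb z Dz; apply: sup_upper_bound; last by exists z.
by split; [exists (cmod (h z)), z | exists b => _ [y Dy <-]; exact: hb].
Qed.

Lemma supnorm_ge0 : D !=set0 -> (forall z, D z -> cmod (h z) <= b) -> 0 <= supnorm D h.
Proof.
move=> [z0 Dz0] hb; apply: le_trans (cmod_ge0 (h z0)) _.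
exact: cmod_le_supnorm hb z0 Dz0.
Qed.

End SupNorm.

Lemma cmod_le_closure {R : realType} {T : topologicalType} {Y : set T} {h : T -> CC R}
    {M : R} : {within closure Y, continuous h} ->
  (forall y, Y y -> cmod (h y) <= M) -> forall z, closure Y z -> cmod (h z) <= M.
Proof.
move=> /subspace_continuousP hc hM z clz; rewrite leNgt; apply/negP => Mlt.
have d0 : (0 : CC R) < (cmod (h z) - M)%:C%C by rewrite ltcR subr_gt0.
have /cvgrPdist_lt/(_ _ d0) := hc z clz.
move=> /clz[y [Yy /(_ (subset_closure Yy))]]; rewrite -cmod_lt => near_y.
have {}near_y : cmod (h z - h y) < cmod (h z) - M := near_y.
have := cmodD (h y) (h z - h y); rewrite subrKC.
have := hM y Yy; lra.
Qed.

(* The library's [pointwise_cvgP] needs a topology on the index type [U]. *)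
Lemma ptws_cvgP {U : Type} {V : topologicalType} (F : set_system (U -> V)) (f : U -> V) :
  Filter F -> (F --> (f : {ptws U -> V})) <-> forall t, (fun g => g t) @ F --> f t.
Proof.
move=> FF; rewrite cvg_sup; split.
  move=> + t => /(_ t).
  rewrite cvg_image; last by rewrite eqEsubset; split=> v // _; exists (cst v).
  apply: cvg_trans => W /=; rewrite ?nbhs_simpl /fmap /= => [[W' + <-]].
  by apply: filterS => g W'g /=; exists g.
move=> + i => /(_ i).
rewrite cvg_image; last by rewrite eqEsubset; split=> v // _; exists (cst v).
move=> + W //=; rewrite ?nbhs_simpl => Q => /Q Q'; exists (@^~ i @^-1` W) => //.
by rewrite eqEsubset; split => [j [? + <-//]|j Wj]; exists (fun _ => j).
Qed.

Lemma ptws_mul_comp_continuous {R : realType} {A U : Type} (a : U -> A) (c : U -> CC R) :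
  continuous (fun u : {ptws A -> CC R} => (fun x => u (a x) * c x) : {ptws U -> CC R}).
Proof.
move=> u; pose Phi := fun u : {ptws A -> CC R} => ((fun x => u (a x) * c x) : U -> CC R).
have coord_cvg t : (fun g => g t) @ (Phi @ nbhs u) --> Phi u t.
  apply: cvgMr_tmp.
  by have /ptws_cvgP := @cvg_id _ (nbhs u); apply.
by move/(@ptws_cvgP U (CC R) (Phi @ nbhs u) (Phi u) _): coord_cvg.
Qed.

Section NormedFunctionSpace.
Context {R : realType} {X : Type} {F : set (X -> CC R)} {N : (X -> CC R) -> R}.
Hypothesis hNF : normed_function_space F N.

Lemma nfs0 : F (fun _ => 0).
Proof. by case: hNF => -[]. Qed.

Lemma nfsZ a {f} : F f -> F (fun x => a * f x).
Proof. by case: hNF => -[_ _ hZ] _; exact: hZ. Qed.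

Lemma nfs_norm_ge0 {f} : F f -> 0 <= N f.
Proof. by case: hNF => _ [hN _ _ _ _]; exact: hN. Qed.

Lemma nfs_norm_eq0 {f} : F f -> N f = 0 -> f = (fun _ => 0).
Proof. by case: hNF => _ [_ hN _ _ _]; exact: hN. Qed.

Lemma nfs_normZ a {f} : F f -> N (fun x => a * f x) = cmod a * N f.
Proof. by case: hNF => _ [_ _ hN _ _]; exact: hN. Qed.

Lemma nfs_norm0 : N (fun _ => 0) = 0.
Proof. by have := @nfs_normZ 0 _ nfs0; rewrite cmodR // !mul0r. Qed.

Lemma nfs_unit_ball0 : [set g | F g /\ N g <= 1] (fun _ => 0).
Proof. by split; [exact: nfs0 | rewrite nfs_norm0]. Qed.

Lemma nfs_mul0 (om : X -> CC R) {f} : F f -> N f = 0 ->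
  F (fun x => om x * f x) /\ N (fun x => om x * f x) = 0.
Proof.
move=> Ff /(nfs_norm_eq0 Ff) -> /=.
by under eq_fun do rewrite mulr0; split; [exact: nfs0 | exact: nfs_norm0].
Qed.

Lemma le_mult_norm {om f} : is_mult F N om -> F f ->
  N (fun x => om x * f x) <= mult_norm F N om * N f.
Proof.
move=> [Fom [c hc]] Ff.
have [Nf0|Nf_neq0] := eqVneq (N f) 0.
  by rewrite Nf0 mulr0 (nfs_mul0 om Ff Nf0).2.
have Nf_gt0 : 0 < N f by rewrite lt0r Nf_neq0 nfs_norm_ge0.
pose a : CC R := (N f)^-1%:C%C.
have cmod_a : cmod a = (N f)^-1 by rewrite cmodR // invr_ge0 ltW.
have has_sup_om : has_sup [set N (fun x => om x * g x) | g in [set g | F g /\ N g <= 1]].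
  split; first by exists (N (fun x => om x * 0)), (fun _ => 0); first exact: nfs_unit_ball0.
  exists `|c| => _ [g [Fg Ng] <-]; apply: le_trans (hc _ Fg) _.
  apply: le_trans (ler_wpM2r (nfs_norm_ge0 Fg) (ler_norm c)) _.
  by rewrite -[leRHS]mulr1 ler_wpM2l.
have : N (fun x => om x * (a * f x)) <= mult_norm F N om.
  apply: sup_upper_bound => //; exists (fun x => a * f x) => //.
  by split; [exact: nfsZ | rewrite nfs_normZ // cmod_a mulVf].
under eq_fun do rewrite mulrCA.
rewrite nfs_normZ; last exact: Fom.
by rewrite cmod_a mulrC ler_pdivrMr.
Qed.

Lemma is_mult_norm_le om B : 0 <= B ->
  (forall f, F f -> 0 < N f ->
     F (fun x => om x * f x) /\ N (fun x => om x * f x) <= B * N f) ->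
  is_mult F N om /\ mult_norm F N om <= B.
Proof.
move=> B0 hB.
have {}hB f : F f -> F (fun x => om x * f x) /\ N (fun x => om x * f x) <= B * N f.
  move=> Ff; have [Nf0|Nf_neq0] := eqVneq (N f) 0.
    by have [Fomf ->] := nfs_mul0 om Ff Nf0; rewrite Nf0 mulr0.
  by apply: hB; rewrite // lt0r Nf_neq0 nfs_norm_ge0.
split; first by split; [move=> f /hB[] | exists B => f /hB[]].
apply: ge_sup.
  by exists (N (fun x => om x * 0)), (fun _ => 0); first exact: nfs_unit_ball0.
move=> _ [g [Fg Ng] <-]; apply: le_trans (hB g Fg).2 _.
by rewrite -[leRHS]mulr1 ler_wpM2l.
Qed.

Lemma is_mult_norm_le_eps om {K s} : 0 < K -> 0 <= s ->
  (forall f, F f -> 0 < N f -> forall eps, 0 < eps ->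
     F (fun x => om x * f x) /\ N (fun x => om x * f x) <= K * (s + eps) * N f) ->
  is_mult F N om /\ mult_norm F N om <= K * s.
Proof.
move=> K_gt0 s_ge0 hK; apply: is_mult_norm_le; first exact: mulr_ge0 (ltW K_gt0) s_ge0.
move=> f Ff Nf_gt0; split; first exact: (hK f Ff Nf_gt0 1 ltr01).1.
apply/ler_addgt0Pr => e e_gt0.
have KNf_gt0 : 0 < K * N f by rewrite mulr_gt0.
apply: le_trans (hK f Ff Nf_gt0 (e / (K * N f)) _).2 _; first by rewrite divr_gt0.
by rewrite mulrDr mulrDl lerD2l mulrCA -mulrA mulrAC mulfV ?gt_eqF ?mulr1.
Qed.

Hypothesis hreg : regular_fs F N.

Lemma ptws_closed_ball r : 0 < r ->
  closed ([set f | F f /\ N f <= r] : set {ptws X -> CC R}).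
Proof.
move=> r_gt0; pose a : CC R := r^-1%:C%C.
have cmod_a : cmod a = r^-1 by rewrite cmodR // invr_ge0 ltW.
have -> : [set f | F f /\ N f <= r] =
    (fun u : {ptws X -> CC R} => (fun x => u x * a) : {ptws X -> CC R}) @^-1`
      [set f | F f /\ N f <= 1].
  apply/seteqP; split => u /=; under eq_fun do rewrite mulrC.
    by move=> [Fu Nu]; rewrite nfs_normZ // cmod_a ler_pdivrMl // mulr1; split; [exact: nfsZ|].
  move=> [Fau Nau]; have -> : u = (fun x => r%:C%C * (a * u x)).
    by apply/funext => x; rewrite mulrA -rmorphM /= mulfV ?gt_eqF // mul1r.
  rewrite nfs_normZ // cmodR; last exact: ltW.
  by split; [exact: nfsZ | rewrite -[leRHS]mulr1 ler_pM2l].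
apply: preimage_closed hreg => u _; exact: (ptws_mul_comp_continuous id (cst a)).
Qed.

End NormedFunctionSpace.

Section BoundedContinuous.
Context {R : realType} {n : nat} (Y : set (CCn R n)).
Local Notation C := (CC R).
Local Notation Cn := (CCn R n).

Definition bounded_continuous (h : Cn -> C) :=
  continuous h /\ exists M : R, forall z, Y z -> cmod (h z) <= M.

Lemma bounded_continuous_cst (c : C) : bounded_continuous (cst c).
Proof. by split; [exact: cst_continuous | exists (cmod c)]. Qed.

Lemma bounded_continuousD f g :
  bounded_continuous f -> bounded_continuous g -> bounded_continuous (f + g).
Proof.
move=> [cf [Mf hf]] [cg [Mg hg]]; split => [z|]; first exact: (continuousD (cf z) (cg z)).
exists (Mf + Mg) => z Yz; apply: le_trans (cmodD _ _) _.
by apply: lerD; [exact: hf | exact: hg].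
Qed.

Lemma bounded_continuousM f g :
  bounded_continuous f -> bounded_continuous g -> bounded_continuous (f * g).
Proof.
move=> [cf [Mf hf]] [cg [Mg hg]]; split => [z|]; first exact: (continuousM (cf z) (cg z)).
exists (Mf * Mg) => z Yz; rewrite cmodM.
by apply: ler_pM; [exact: cmod_ge0 | exact: cmod_ge0 | exact: hf | exact: hg].
Qed.

Lemma bounded_continuousX f k : bounded_continuous f -> bounded_continuous (f ^+ k).
Proof.
move=> bf; elim: k => [|k IH]; first exact: bounded_continuous_cst.
by rewrite exprS; exact: bounded_continuousM.
Qed.

Lemma bounded_continuous_sum (I : Type) (r : seq I) (G : I -> Cn -> C) :
  (forall i, bounded_continuous (G i)) -> bounded_continuous (\sum_(i <- r) G i).
Proof.
move=> bG; apply: big_ind => //; [exact: bounded_continuous_cst | exact: bounded_continuousD].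
Qed.

Lemma bounded_continuous_prod (I : Type) (r : seq I) (G : I -> Cn -> C) :
  (forall i, bounded_continuous (G i)) -> bounded_continuous (\prod_(i <- r) G i).
Proof.
move=> bG; apply: big_ind => //; [exact: bounded_continuous_cst | exact: bounded_continuousM].
Qed.

Lemma normr_mx_coord (z : Cn) (i : 'I_n) : `|z ord0 i| <= `|z|.
Proof.
rewrite [leRHS]/Num.norm /= mx_normE -[leLHS]nngE num_le.
exact: (le_bigmax _ _ (ord0, i)).
Qed.

Hypothesis Y_bounded : bounded_set Y.

Lemma bounded_continuous_coord (i : 'I_n) : bounded_continuous (fun z => z ord0 i).
Proof.
split; first exact: coord_continuous.
have [M [_ hM]] := Y_bounded; have M_lt : M < M + 1 by rewrite ltrDl.
exists (complex.Re (M + 1)) => z Yz.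
have : `|z ord0 i| <= M + 1 := le_trans (normr_mx_coord z i) (hM _ M_lt z Yz).
by rewrite -cmodE lecE => /andP[].
Qed.

Lemma bounded_continuous_polyfun (p : mpoly.mpoly n C) : bounded_continuous (polyfun p).
Proof.
have -> : polyfun p = \sum_(m <- mpoly.msupp p) (cst (mpoly.mcoeff m p) *
    \prod_i (fun z : Cn => z ord0 i) ^+ mpoly.fun_of_multinom m i).
  apply/funext => z; rewrite /polyfun mpoly.mevalE fct_sumE.
  apply: eq_bigr => m _; rewrite mulrfctE fct_prodE /=; congr (_ * _).
  by apply: eq_bigr => i _; rewrite exprfctE.
apply: bounded_continuous_sum => m; apply: bounded_continuousM.
  exact: bounded_continuous_cst.
by apply: bounded_continuous_prod => i; apply/bounded_continuousX/bounded_continuous_coord.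
Qed.

Lemma polyfun_bounded_closure (p : mpoly.mpoly n C) :
  exists M : R, forall z, closure Y z -> cmod (polyfun p z) <= M.
Proof.
have [p_cont [M hM]] := bounded_continuous_polyfun p.
by exists M; apply: cmod_le_closure hM; exact: continuous_subspaceT.
Qed.

End BoundedContinuous.

Section Composition.
Context {R : realType} {X : Type} {F : set (X -> CC R)} {N : (X -> CC R) -> R}.
Context {n : nat} (w : 'I_n -> X -> CC R) (Y : set (CCn R n)) (K : R).
Local Notation C := (CC R).
Hypotheses (hNF : normed_function_space F N) (hreg : regular_fs F N).
Hypotheses (Y0 : Y !=set0) (Y_bounded : bounded_set Y) (K_gt0 : 0 < K).
Hypothesis poly_mult : forall p : mpoly.mpoly n C,
  is_mult F N (polyfun p \o vecfun w) /\
  mult_norm F N (polyfun p \o vecfun w) <= K * supnorm (closure Y) (polyfun p).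

Let closureY0 : closure Y !=set0 := subset_nonempty (@subset_closure _ Y) Y0.

Lemma polyfun_comp_mult_le {p b f} : (forall z, closure Y z -> cmod (polyfun p z) <= b) ->
  F f -> F (fun x => polyfun p (vecfun w x) * f x) /\
    N (fun x => polyfun p (vecfun w x) * f x) <= K * b * N f.
Proof.
move=> p_le Ff; have [p_mult p_norm] := poly_mult p.
split; first exact: p_mult.1.
apply: le_trans (le_mult_norm hNF p_mult Ff) (ler_wpM2r (nfs_norm_ge0 hNF Ff) _).
exact: le_trans p_norm (ler_wpM2l (ltW K_gt0) (supnorm_le closureY0 p_le)).
Qed.

Section Algebra.
Hypothesis w_closure : forall x, closure Y (vecfun w x).
Hypothesis poly_dense : forall g, Aalg Y g -> forall e : R, 0 < e ->
  exists p : mpoly.mpoly n C, supnorm (closure Y) (fun z => g z - polyfun p z) < e.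

Lemma Aalg_polyfun_approx {g} : Aalg Y g -> exists ps : nat -> mpoly.mpoly n C,
  forall k z, closure Y z -> cmod (g z - polyfun (ps k) z) <= k.+1%:R^-1.
Proof.
move=> Ag; have [[_ [M hM]] g_cont] := Ag.
have /choice[ps hps] : forall k : nat, exists p : mpoly.mpoly n C,
    supnorm (closure Y) (fun z => g z - polyfun p z) < k.+1%:R^-1.
  by move=> k; apply: poly_dense; rewrite // invr_gt0.
exists ps => k z clz; apply: le_trans (ltW (hps k)).
have [Mp hMp] := polyfun_bounded_closure _ Y_bounded (ps k).
apply: (cmod_le_supnorm (b := M + Mp)) clz => y cly.
apply: le_trans (cmodD _ _) _; rewrite cmodN lerD ?hMp //.
exact: cmod_le_closure g_cont hM y cly.
Qed.

Lemma Aalg_comp_mult g : Aalg Y g ->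
  is_mult F N (g \o vecfun w) /\
  mult_norm F N (g \o vecfun w) <= K * supnorm (closure Y) g.
Proof.
move=> Ag; have [[_ [M hM]] g_cont] := Ag.
have g_le_M := cmod_le_closure g_cont hM.
set s := supnorm (closure Y) g; have s_ge0 : 0 <= s := supnorm_ge0 closureY0 g_le_M.
have [ps ps_approx] := Aalg_polyfun_approx Ag.
apply: (is_mult_norm_le_eps hNF _ K_gt0 s_ge0) => f Ff Nf_gt0 eps eps_gt0.
pose u k := (fun x => polyfun (ps k) (vecfun w x) * f x) : {ptws X -> C}.
suff : [set v : {ptws X -> C} | F v /\ N v <= K * (s + eps) * N f]
    (fun x => g (vecfun w x) * f x) by [].
have r_gt0 : 0 < K * (s + eps) * N f by rewrite !mulr_gt0 // ltr_wpDl.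
apply: (@closed_cvg nat {ptws X -> C} \oo _ u _ (ptws_closed_ball hNF hreg _ r_gt0)).
- near=> k.
  have ps_le : forall z, closure Y z -> cmod (polyfun (ps k) z) <= s + k.+1%:R^-1.
    move=> z clz; rewrite -(subrKC (g z) (polyfun (ps k) z)).
    apply: le_trans (cmodD _ _) _; rewrite cmodB.
    exact: lerD (cmod_le_supnorm g_le_M _ clz) (ps_approx k z clz).
  have [Fu Nu] := polyfun_comp_mult_le ps_le Ff; split => //; apply: le_trans Nu _.
  apply/(ler_wpM2r (nfs_norm_ge0 hNF Ff))/(ler_wpM2l (ltW K_gt0)).
  rewrite lerD2l; apply: ltW.
  by near: k; exact: near_infty_natSinv_lt (PosNum eps_gt0).
- apply/ptws_cvgP => t; apply: cvgMr_tmp; apply: cvg_cmod_natSinv => k.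
  exact: ps_approx.
Unshelve. all: by end_near.
Qed.

End Algebra.

Section Hardy.
Hypothesis w_Y : forall x, Y (vecfun w x).
Hypothesis Hinf_ball_closure :
  [set restr Y g | g in [set g | Hinf Y g /\ supnorm Y g <= 1]] `<=`
  closure [set restr Y (polyfun p) |
             p in [set p : mpoly.mpoly n C | supnorm Y (polyfun p) < 1]].

Lemma Hinf_ball_comp_mult_le {h f} : Hinf Y h -> supnorm Y h <= 1 -> F f -> 0 < N f ->
  F (fun x => h (vecfun w x) * f x) /\ N (fun x => h (vecfun w x) * f x) <= K * N f.
Proof.
move=> Hh h_le1 Ff Nf_gt0.
pose a (x : X) : Y := exist _ (vecfun w x) (mem_set (w_Y x)).
pose Phi := fun u : {ptws Y -> C} => ((fun x => u (a x) * f x) : {ptws X -> C}).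
have KNf_gt0 : 0 < K * N f by rewrite mulr_gt0.
have ball_closed : closed (Phi @^-1` [set v | F v /\ N v <= K * N f]).
  apply: preimage_closed (ptws_closed_ball hNF hreg _ KNf_gt0) => u _.
  exact: ptws_mul_comp_continuous.
have poly_ball_sub : [set restr Y (polyfun p) |
    p in [set p : mpoly.mpoly n C | supnorm Y (polyfun p) < 1]] `<=`
    Phi @^-1` [set v | F v /\ N v <= K * N f].
  move=> _ [p p_lt1 <-]; have [p_cont [M hM]] := bounded_continuous_polyfun _ Y_bounded p.
  have p_le1 : forall z, closure Y z -> cmod (polyfun p z) <= 1.
    have p_le1_Y z : Y z -> cmod (polyfun p z) <= 1.
      by move=> Yz; exact: le_trans (cmod_le_supnorm hM _ Yz) (ltW p_lt1).
    by apply: cmod_le_closure p_le1_Y; exact: continuous_subspaceT.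
  by have [? ] := polyfun_comp_mult_le p_le1 Ff; rewrite mulr1.
suff : (Phi @^-1` [set v | F v /\ N v <= K * N f]) (restr Y h) by [].
rewrite ((closure_id _).1 ball_closed); apply: (closureS poly_ball_sub).
by apply: Hinf_ball_closure; exists h.
Qed.

Lemma Hinf_comp_mult g : Hinf Y g ->
  is_mult F N (g \o vecfun w) /\ mult_norm F N (g \o vecfun w) <= K * supnorm Y g.
Proof.
move=> [g_holo [M hM]]; set s := supnorm Y g.
have s_ge0 : 0 <= s := supnorm_ge0 Y0 hM.
apply: (is_mult_norm_le_eps hNF _ K_gt0 s_ge0) => f Ff Nf_gt0 eps eps_gt0.
have t_gt0 : 0 < s + eps by rewrite ltr_wpDl.
pose a : C := (s + eps)^-1%:C%C.
have cmod_a : cmod a = (s + eps)^-1 by rewrite cmodR // invr_ge0 ltW.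
pose h z := a * g z.
have Hh : Hinf Y h.
  split; first by move=> z Yz; have := differentiableZ a (g_holo z Yz); exact.
  exists ((s + eps)^-1 * M) => z Yz; rewrite cmodM cmod_a.
  by apply: ler_wpM2l; [rewrite invr_ge0 ltW | exact: hM].
have h_le1 : supnorm Y h <= 1.
  apply: supnorm_le Y0 _ => z Yz; rewrite cmodM cmod_a ler_pdivrMl // mulr1.
  by apply: le_trans (cmod_le_supnorm hM _ Yz) _; rewrite lerDl ltW.
have [Fhf Nhf] := Hinf_ball_comp_mult_le Hh h_le1 Ff Nf_gt0.
have -> : (fun x => (g \o vecfun w) x * f x) =
    (fun x => (s + eps)%:C%C * (h (vecfun w x) * f x)).
  by apply/funext => x; rewrite /h !mulrA -rmorphM /= mulfV ?gt_eqF // mul1r.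
rewrite (nfs_normZ hNF) // cmodR ?(ltW t_gt0) //; split; first exact: (nfsZ hNF).
by rewrite [K * _]mulrC -mulrA ler_pM2l.
Qed.

End Hardy.
End Composition.

Theorem proposition5p7 (R : realType) (X : Type)
  (F : set (X -> CC R)) (N : (X -> CC R) -> R)
  (n : nat) (w : 'I_n -> X -> CC R) (Y : set (CCn R n)) :
  normed_function_space F N -> regular_fs F N -> one_independent F ->
  (forall i, is_mult F N (w i)) ->
  bounded_domain Y ->
  (* polynomials are dense in A(Y) for sup over the closure of Y *)
  (forall g, Aalg Y g -> forall e : R, 0 < e ->
     exists p : mpoly.mpoly n (CC R),
       supnorm (closure Y) (fun z => g z - polyfun p z) < e) ->
  (* pointwise closure on Y of the open unit ball of the polynomials
     = closed unit ball of H_infty(Y) *)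
  closure [set restr Y (polyfun p) |
             p in [set p : mpoly.mpoly n (CC R) | supnorm Y (polyfun p) < 1]]
    = [set restr Y g | g in [set g | Hinf Y g /\ supnorm Y g <= 1]] ->
  (forall x, closure Y (vecfun w x)) ->
  bounded_into_Mult F N [set: mpoly.mpoly n (CC R)]
    (fun p => supnorm (closure Y) (polyfun p)) (fun p => polyfun p \o vecfun w) ->
  bounded_into_Mult F N (Aalg Y) (supnorm (closure Y)) (fun g => g \o vecfun w)
  /\ ((forall x, Y (vecfun w x)) ->
      bounded_into_Mult F N (Hinf Y) (supnorm Y) (fun g => g \o vecfun w)).
Proof.
move=> hNF hreg _ _ [Y0 _ _ Y_bounded] poly_dense ball_closure w_closure [poly_mult [K hK]].
have K1_gt0 : 0 < `|K| + 1 by rewrite ltr_wpDl.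
have poly_mult_le p : is_mult F N (polyfun p \o vecfun w) /\
    mult_norm F N (polyfun p \o vecfun w) <= (`|K| + 1) * supnorm (closure Y) (polyfun p).
  split; first exact: poly_mult.
  have [M hM] := polyfun_bounded_closure _ Y_bounded p.
  have closureY0 := subset_nonempty (@subset_closure _ Y) Y0.
  apply: le_trans (hK p I) (ler_wpM2r (supnorm_ge0 closureY0 hM) _).
  by rewrite (le_trans (ler_norm K)) // lerDl.
have Aalg_mult := Aalg_comp_mult _ _ _ hNF hreg Y0 Y_bounded K1_gt0 poly_mult_le
  w_closure poly_dense.
split; first by split=> [g /Aalg_mult[]|]; last exists (`|K| + 1) => g /Aalg_mult[].
move=> w_Y; move: ball_closure; rewrite eqEsubset => -[_ Hinf_ball].
have Hinf_mult := Hinf_comp_mult _ _ _ hNF hreg Y0 Y_bounded K1_gt0 poly_mult_le w_Y Hinf_ball.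
by split=> [g /Hinf_mult[]|]; last exists (`|K| + 1) => g /Hinf_mult[].
Qed.
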